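(* Let $X$ be a generalized homology sphere of dimension $2n$. Suppose that for every vertex $v$ of $X$ one has $(-1)^nh_{\mathrm{Lk}_v}(-1)\geq0$. Then the coefficient of $t^n$ in $\gamma_X$ (its highest possible coefficient) is nonnegative.
   Context: Simplicial complexes contain the empty face; $\#\sigma$ is the number of vertices of $\sigma$. Link: $\mathrm{Lk}_\sigma=\{\tau\in X:\sigma\cup\tau\in X,\ \sigma\cap\tau=\emptyset\}$. Generalized homology sphere of dimension $m-1$: every link $\mathrm{Lk}_\sigma$ (including $\sigma=\emptyset$) has the homology of a sphere of dimension $m-1-\#\sigma$; links of vertices of $X$ are then generalized homology spheres of dimension $2n-1$. $f_X(t)=\sum_{\sigma\in X}t^{\#\sigma}$; for a generalized homology sphere of dimension $m-1$, $h_X$ is defined by $(1+t)^mh_X(\frac1{1+t})=t^mf_X(\frac1t)$ and $\gamma_X$ is the unique polynomial of degree at most $\lfloor m/2\rfloor$ with $h_X(t)=(1+t)^m\gamma_X(\frac{t}{(1+t)^2})$. *)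

From HB Require Import structures.
From mathcomp Require Import all_boot all_order all_algebra.
Set Implicit Arguments. Unset Strict Implicit. Unset Printing Implicit Defensive.
Import Order.TTheory GRing.Theory Num.Theory.
Local Open Scope ring_scope.

Section Complexes.
Variable V : finType.

Definition simplicial_complex (X : {set {set V}}) : Prop :=
  set0 \in X /\ forall s t : {set V}, s \in X -> t \subset s -> t \in X.

Definition link (X : {set {set V}}) (s : {set V}) : {set {set V}} :=
  [set t in X | (s :|: t \in X) && [disjoint s & t]].

Definition is_vertex (X : {set {set V}}) (v : V) : bool := [set v] \in X.

Variable k : fieldType.

Definition bsign (s : {set V}) (v : V) : k :=
  (-1) ^+ #|[set u in s | (enum_rank u < enum_rank v)%N]|.

(* Matrix (row convention) of the augmented simplicial boundary map
   d_c : C_c -> C_(c-1), where C_c is spanned by the faces of X with c vertices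
   (C_0 is spanned by the empty face).  Rows/columns are indexed by all
   subsets of V; rows/columns of non-faces or of faces of the wrong size are 0. *)
Definition bdmx (X : {set {set V}}) (c : nat) : 'M[k]_(#|[set: {set V}]|) :=
  \matrix_(i, j)
    (let s : {set V} := @enum_val _ (mem [set: {set V}]) i in
     let t : {set V} := @enum_val _ (mem [set: {set V}]) j in
     if [&& (0 < c)%N, s \in X, #|s| == c, t \subset s & #|t| == c.-1]
     then \sum_(v in s :\: t) bsign s v else 0).

Definition nfaces (X : {set {set V}}) (c : nat) : nat :=
  #|[set s in X | #|s| == c]|.

(* Dimension over k of the reduced homology of X in degree c-1
   (augmented chain complex; degree -1 corresponds to c = 0). *)
Definition rbetti (X : {set {set V}}) (c : nat) : nat :=
  (nfaces X c - \rank (bdmx X c) - \rank (bdmx X c.+1))%N.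

Definition homology_sphere_of_dim (X : {set {set V}}) (d : int) : Prop :=
  forall c : nat, rbetti X c = (if c%:Z == d + 1 then 1%N else 0%N).

Definition gen_homology_sphere (X : {set {set V}}) (d : int) : Prop :=
  simplicial_complex X /\
  forall s, s \in X -> homology_sphere_of_dim (link X s) (d - #|s|%:Z).

End Complexes.

Definition fpoly (V : finType) (X : {set {set V}}) : {poly rat} :=
  \sum_(s in X) 'X^#|s|.

Definition is_hpoly (m : nat) (f h : {poly rat}) : Prop :=
  forall x : rat, x != 0 -> x != -1 ->
    (1 + x) ^+ m * h.[(1 + x)^-1] = x ^+ m * f.[x^-1].

Definition is_gammapoly (m : nat) (h g : {poly rat}) : Prop :=
  (size g <= (m./2).+1)%N /\
  forall x : rat, x != -1 -> h.[x] = (1 + x) ^+ m * g.[x / (1 + x) ^+ 2].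

From HB Require Import structures.
From mathcomp Require Import all_boot all_order all_algebra.
From mathcomp Require Import ring zify.
Set Implicit Arguments.
Unset Strict Implicit.
Unset Printing Implicit Defensive.

(** The polynomial [P(t) = t^(2n+1) f_X(1/t) = sum_s t^(2n+1-#s)] factors through
    the gamma-expansion as [P(t) = (t+2) Q(t)] with
    [Q(t) = (t+2)^(2n) gamma_X((t+1)/(t+2)^2)], so [P(-2) = 0] and
    [P'(-2) = Q(-2) = (-1)^n gamma_n].  On the other hand
    [h_(Lk v)(-1) = sum_(s containing v) (-2)^(2n+1-#s)], and summing over all vertices
    counts every face [s] exactly [#s] times:
    [sum_v h_(Lk v)(-1) = sum_s #s (-2)^(2n+1-#s) = (2n+1) P(-2) + 2 P'(-2) = 2 (-1)^n gamma_n].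
    Hence [2 gamma_n = sum_v (-1)^n h_(Lk v)(-1) >= 0].  The homological hypotheses
    are only needed through the existence of [gamma_X], which also bounds the face
    sizes by [2n+1]. *)

Import Order.TTheory GRing.Theory Num.Theory.
Local Open Scope ring_scope.

Lemma poly_eq_on_pos (R : numDomainType) (p q : {poly R}) :
  (forall x, 0 < x -> p.[x] = q.[x]) -> p = q.
Proof.
move=> eq_pq; apply/eqP; rewrite -subr_eq0; apply/negPn/negP => nz_pq.
pose rs := [seq i.+1%:R : R | i <- iota 0 (size (p - q))].
suff : (size rs < size (p - q)%R)%N by rewrite size_map size_iota ltnn.
apply: max_poly_roots nz_pq _ _.
  by apply/allP => _ /mapP[i _ ->]; rewrite /root !hornerE eq_pq ?subrr ?ltr0Sn.
by rewrite map_inj_uniq ?iota_uniq // => i j /eqP; rewrite eqr_nat eqSS => /eqP.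
Qed.

Lemma exponent_le_of_poly (R : numFieldType) (I : finType) (A : {pred I})
    (e : I -> nat) (m : nat) (p : {poly R}) :
  (forall x, 0 < x -> \sum_(i in A) x ^+ m / x ^+ e i = p.[x]) ->
  forall i, i \in A -> (e i <= m)%N.
Proof.
move=> eq_p i0 Ai0; rewrite leqNgt; apply/negP => lt_m_i0.
pose d := (\max_(i in A) e i)%N.
have le_d i : i \in A -> (e i <= d)%N by move=> Ai; apply: leq_bigmax_cond.
have eq_poly : \sum_(i in A) 'X^(d + m - e i) = 'X^d * p :> {poly R}.
  apply: poly_eq_on_pos => x x_gt0; rewrite hornerM hornerXn -eq_p // mulr_sumr.
  rewrite horner_sum; apply: eq_bigr => i Ai.
  rewrite hornerXn mulrA -exprD exprB ?unitfE ?gt_eqF ?exprn_gt0 //.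
  exact: leq_trans (le_d i Ai) (leq_addr _ _).
have lt_d : (d + m - e i0 < d)%N by have := le_d i0 Ai0; lia.
have := congr1 (fun r : {poly R} => r`_(d + m - e i0)) eq_poly.
rewrite coefXnM lt_d coef_sum (bigD1 i0) //= coefXn eqxx.
apply/eqP; rewrite gt_eqF // ltr_pwDl // sumr_ge0 // => i _.
by rewrite coefXn ler0n.
Qed.

Lemma sum_weighted_powers (R : comNzRingType) (I : finType) (A : {pred I})
    (e : I -> nat) (m : nat) (a : R) :
  (forall i, i \in A -> (e i <= m)%N) ->
  let P := \sum_(i in A) 'X^(m - e i) in
  \sum_(i in A) a ^+ (m - e i) *+ e i = P.[a] *+ m - a * P^`().[a].
Proof.
move=> le_m P; rewrite /P (big_morph _ (@derivD _) (@deriv0 _)) !horner_sum.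
rewrite -sumrMnl mulr_sumr -sumrB; apply: eq_bigr => i Ai.
rewrite derivXn hornerMn !hornerXn mulrnAr.
case: (m - e i)%N (subnK (le_m i Ai)) => [|k] <-; first by rewrite !mulr0n subr0.
by rewrite -exprS -mulrnBr ?addKn // ltnS leq_addr.
Qed.

Lemma deriv_mul_linear_root (R : comNzRingType) (c : R) (q : {poly R}) :
  (('X + c%:P) * q)^`().[- c] = q.[- c].
Proof.
rewrite derivM derivD derivX derivC addr0 mul1r hornerD hornerM.
by rewrite !hornerE addNr mul0r addr0.
Qed.

Section Links.
Variables (V : finType) (X : {set {set V}}).

Lemma mem_link1 v s : (s \in link X [set v]) = [&& s \in X, v |: s \in X & v \notin s].
Proof. by rewrite inE disjoints1. Qed.

Lemma card_link1_le v s m :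
  (forall t, t \in X -> (#|t| <= m.+1)%N) -> s \in link X [set v] -> (#|s| <= m)%N.
Proof.
by move=> le_X; rewrite mem_link1 => /and3P[_ /le_X + vNs]; rewrite cardsU1 vNs.
Qed.

Hypothesis X_sc : simplicial_complex X.

Lemma link1_nonvertex v : ~~ is_vertex X v -> link X [set v] = set0.
Proof.
move=> v_nX; apply/setP => s; rewrite mem_link1 inE.
apply: contraNF v_nX => /and3P[_ /(X_sc.2 _ [set v]) + _]; apply.
by rewrite sub1set setU11.
Qed.

Lemma sum_link1 (R : nmodType) v (F : {set V} -> R) :
  \sum_(s in link X [set v]) F (v |: s) = \sum_(t in X | v \in t) F t.
Proof.
symmetry; rewrite (reindex_onto (fun s => v |: s) (fun t => t :\ v)) /=; last first.
  by move=> t /andP[_ vt]; rewrite setD1K.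
apply: eq_bigl => s; rewrite mem_link1 setU11 andbT.
have [vs | vNs] := boolP (v \in s).
  have -> : ((v |: s) :\ v == s) = false.
    by apply/negbTE/eqP => eq_s; move: vs; rewrite -eq_s setD11.
  by rewrite !andbF.
rewrite setU1K // eqxx /= !andbT andb_idl // => X_vs.
by rewrite (X_sc.2 _ _ X_vs) // subsetUr.
Qed.

Lemma sum_vertices_links (R : nmodType) (F : {set V} -> R) :
  \sum_v \sum_(s in link X [set v]) F (v |: s) = \sum_(t in X) F t *+ #|t|.
Proof.
under eq_bigr do rewrite sum_link1.
rewrite (exchange_big_dep (mem X)) /=; last by move=> v t _ /andP[].
by apply: eq_bigr => t Xt; rewrite -sumr_const; apply: eq_bigl => v; rewrite Xt.
Qed.

End Links.

Definition rev_fpoly (V : finType) (m : nat) (X : {set {set V}}) : {poly rat} :=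
  \sum_(t in X) 'X^(m - #|t|).

Definition hpoly_of (V : finType) (m : nat) (Y : {set {set V}}) : {poly rat} :=
  \sum_(s in Y) 'X^#|s| * (1 - 'X) ^+ (m - #|s|).

Section FacePolynomials.
Variables (V : finType) (m : nat) (X : {set {set V}}).
Hypothesis le_X : forall t, t \in X -> (#|t| <= m)%N.

Lemma fpoly_reciprocal (x : rat) : x != 0 ->
  x ^+ m * (fpoly X).[x^-1] = \sum_(t in X) x ^+ m / x ^+ #|t|.
Proof.
move=> x_neq0; rewrite horner_sum mulr_sumr.
by apply: eq_bigr => t _; rewrite hornerXn exprVn.
Qed.

Lemma rev_fpolyE (x : rat) : x != 0 -> (rev_fpoly m X).[x] = x ^+ m * (fpoly X).[x^-1].
Proof.
move=> x_neq0; rewrite fpoly_reciprocal // horner_sum; apply: eq_bigr => t Xt.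
by rewrite hornerXn exprB ?le_X ?unitfE.
Qed.

Lemma hpoly_term (x : rat) (j : nat) : x != 0 -> 1 + x != 0 -> (j <= m)%N ->
  (1 + x) ^+ m * ((1 + x)^-1 ^+ j * (1 - (1 + x)^-1) ^+ (m - j)) = x ^+ (m - j).
Proof.
move=> x_neq0 x1_neq0 le_jm.
have -> : 1 - (1 + x)^-1 = x / (1 + x) by field.
rewrite -(subnK le_jm) addnK exprD expr_div_n !exprVn.
by field; rewrite !expf_neq0.
Qed.

Lemma hpoly_ofP : is_hpoly m (fpoly X) (hpoly_of m X).
Proof.
move=> x x_neq0 x_neqN1; rewrite -rev_fpolyE // !horner_sum mulr_sumr.
have x1_neq0 : 1 + x != 0 by rewrite addrC addr_eq0.
apply: eq_bigr => t Xt.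
by rewrite hornerM horner_exp !hornerE /= -mulrA hpoly_term ?le_X.
Qed.

Lemma hpoly_of_at_N1 : ~~ odd m ->
  (hpoly_of m X).[-1] = \sum_(t in X) (-2) ^+ (m - #|t|).
Proof.
move=> m_even; rewrite horner_sum; apply: eq_bigr => t Xt.
rewrite hornerM horner_exp !hornerE opprK -[-2]mulN1r exprMn.
by rewrite -[in RHS]signr_odd oddB ?le_X // (negbTE m_even) signr_odd.
Qed.

End FacePolynomials.

Definition gamma_cofactor (n : nat) (g : {poly rat}) : {poly rat} :=
  \sum_(i < n.+1) g`_i *: (('X + 1%:P) ^+ i * ('X + 2%:P) ^+ (2 * (n - i))).

Lemma gamma_cofactor_at_N2 n g : (gamma_cofactor n g).[-2] = g`_n * (-1) ^+ n.
Proof.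
rewrite horner_sum big_ord_recr /= big1 ?add0r => [|i _].
  by rewrite !hornerE /= subnn muln0 expr0 mulr1 (_ : -2 + 1 = -1).
rewrite !hornerE /= (_ : -2 + 1 + 1 = 0) // expr0n.
by rewrite muln_eq0 subn_eq0 leqNgt ltn_ord /= mulr0.
Qed.

Lemma gamma_cofactor_term (F : fieldType) (x c : F) (n i : nat) :
  1 + x != 0 -> x + 2 != 0 -> (i <= n)%N ->
  let y := (1 + x)^-1 in
  (1 + x) ^+ (2 * n).+1 * ((1 + y) ^+ (2 * n).+1 * (c * (y / (1 + y) ^+ 2) ^+ i))
  = (x + 2) * (c * ((x + 1) ^+ i * (x + 2) ^+ (2 * (n - i)))).
Proof.
move=> x1_neq0 x2_neq0 le_in y.
have -> : 1 + y = (x + 2) / (1 + x) by rewrite /y; field.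
have -> : y / ((x + 2) / (1 + x)) ^+ 2 = (1 + x) / (x + 2) ^+ 2.
  by rewrite /y; field; apply/andP.
rewrite [LHS]mulrA -exprMn [_ * (_ / _)]mulrC divfK // (addrC x 1).
rewrite expr_div_n -exprM -[in LHS](subnK le_in) mulnDr -addSn exprD exprS.
have : (x + 2) ^+ (2 * i) != 0 by rewrite expf_neq0.
set a := (1 + x) ^+ i; set b := (x + 2) ^+ (2 * i); set d := (x + 2) ^+ (2 * (n - i)).
by move=> b_neq0; field.
Qed.

Lemma gamma_cofactorE n h g (x : rat) : is_gammapoly (2 * n).+1 h g ->
  1 + x != 0 -> x + 2 != 0 ->
  (1 + x) ^+ (2 * n).+1 * h.[(1 + x)^-1] = (x + 2) * (gamma_cofactor n g).[x].
Proof.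
move=> [size_g h_g] x1_neq0 x2_neq0.
have {}size_g : (size g <= n.+1)%N by move: size_g; have -> : ((2 * n).+1)./2 = n by lia.
have y_neqN1 : (1 + x)^-1 != -1.
  rewrite -invrN1 (inj_eq invr_inj); apply: contraNneq x2_neq0 => x1_eq.
  by rewrite -[x](addKr 1) x1_eq.
rewrite h_g // (horner_coef_wide _ size_g) horner_sum !mulr_sumr.
apply: eq_bigr => i _.
rewrite hornerZ hornerM !horner_exp !hornerD hornerX !hornerC.
by rewrite gamma_cofactor_term // -ltnS.
Qed.

Section GammaComplex.
Variables (V : finType) (X : {set {set V}}) (n : nat) (h g : {poly rat}).
Hypotheses (hX : is_hpoly (2 * n).+1 (fpoly X) h) (hg : is_gammapoly (2 * n).+1 h g).

Lemma fpoly_reciprocal_gamma (x : rat) : 0 < x ->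
  \sum_(t in X) x ^+ (2 * n).+1 / x ^+ #|t| = (('X + 2%:P) * gamma_cofactor n g).[x].
Proof.
move=> x_gt0; have x_neq0 : x != 0 by rewrite gt_eqF.
have x_neqN1 : x != -1 by rewrite gt_eqF // (lt_trans (ltrN10 _)).
have [x1_neq0 x2_neq0] : 1 + x != 0 /\ x + 2 != 0 by rewrite !gt_eqF ?addr_gt0.
rewrite -fpoly_reciprocal // -hX // (gamma_cofactorE hg) //.
by rewrite hornerM hornerD hornerX hornerC.
Qed.

Lemma card_face_le_gamma t : t \in X -> (#|t| <= (2 * n).+1)%N.
Proof. exact: exponent_le_of_poly fpoly_reciprocal_gamma t. Qed.

Lemma rev_fpoly_gamma : rev_fpoly (2 * n).+1 X = ('X + 2%:P) * gamma_cofactor n g.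
Proof.
apply: poly_eq_on_pos => x x_gt0.
have x_neq0 : x != 0 by rewrite gt_eqF.
by rewrite (rev_fpolyE card_face_le_gamma) // fpoly_reciprocal // fpoly_reciprocal_gamma.
Qed.

End GammaComplex.

Lemma sum_link_hpoly_at_N1 (V : finType) (X : {set {set V}}) (n : nat) :
  simplicial_complex X -> (forall t, t \in X -> (#|t| <= (2 * n).+1)%N) ->
  let P := rev_fpoly (2 * n).+1 X in
  \sum_v (hpoly_of (2 * n) (link X [set v])).[-1] = P.[-2] *+ (2 * n).+1 + 2 * P^`().[-2].
Proof.
move=> X_sc le_X P.
have le_link v s : s \in link X [set v] -> (#|s| <= 2 * n)%N by apply: card_link1_le.
transitivity (\sum_v \sum_(s in link X [set v]) (-2 : rat) ^+ ((2 * n).+1 - #|v |: s|)).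
  apply: eq_bigr => v _; rewrite (hpoly_of_at_N1 (le_link v)) ?oddM //.
  by apply: eq_bigr => s; rewrite mem_link1 cardsU1 => /and3P[_ _ ->].
rewrite (sum_vertices_links X_sc (fun t => (-2) ^+ ((2 * n).+1 - #|t|))).
by rewrite sum_weighted_powers // mulNr opprK.
Qed.

Theorem corollary2p2p2 (k : fieldType) (V : finType) (X : {set {set V}}) (n : nat) :
  gen_homology_sphere k X (2 * n)%N%:Z ->
  (forall v : V, is_vertex X v ->
     forall hv : {poly rat}, is_hpoly (2 * n) (fpoly (link X [set v])) hv ->
       0 <= (-1) ^+ n * hv.[-1]) ->
  forall h g : {poly rat},
    is_hpoly (2 * n).+1 (fpoly X) h ->
    is_gammapoly (2 * n).+1 h g ->
    0 <= g`_n.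
Proof.
move=> [X_sc _] link_hpoly_ge0 h g hX hg.
have le_X := card_face_le_gamma hX hg.
have P_eq := rev_fpoly_gamma hX hg.
have : 0 <= \sum_v (-1) ^+ n * (hpoly_of (2 * n) (link X [set v])).[-1].
  apply: sumr_ge0 => v _; have [v_X | v_nX] := boolP (is_vertex X v).
    by apply: link_hpoly_ge0 v_X _ (hpoly_ofP (fun s => card_link1_le le_X)).
  by rewrite (link1_nonvertex X_sc v_nX) /hpoly_of big_set0 horner0 mulr0.
rewrite -mulr_sumr sum_link_hpoly_at_N1 // P_eq deriv_mul_linear_root.
rewrite hornerM hornerD hornerX hornerC addNr mul0r mul0rn add0r gamma_cofactor_at_N2.
by rewrite mulrCA [_ * (g`_n * _)]mulrCA -expr2 sqrr_sign mulr1 pmulr_rge0.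
Qed.
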